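(* Let $(A,\leq,\cdot,/)$ be a right-residuated magma satisfying condition (N). Then: (1) for every $x\in A$, $x/x$ is a maximal element of $(A,\leq)$; (2) $((x/x)y)/y = x/x$ for all $x,y\in A$; (3) if $(A,\leq)$ has a top element, then $x/x$ equals this top element for every $x\in A$.
   Context: Write $xy$ for $x\cdot y$; $\cdot$ binds more strongly than $/$, and $/$ binds more strongly than $\sqcap$, where $x\sqcap y := (x/y)y$. A right-residuated magma is a structure $(A,\leq,\cdot,/)$ where $(A,\leq)$ is a poset and $xy\leq z\iff x\leq z/y$ for all $x,y,z\in A$. Condition (N): for all $x,y\in A$, $x\leq y\iff x = y\sqcap x$. *)

Record RRMagma := {
  carrier :> Type;
  le : carrier -> carrier -> Prop;
  mul : carrier -> carrier -> carrier;
  rdiv : carrier -> carrier -> carrier;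
  le_refl : forall x, le x x;
  le_antisym : forall x y, le x y -> le y x -> x = y;
  le_trans : forall x y z, le x y -> le y z -> le x z;
  residuation : forall x y z, le (mul x y) z <-> le x (rdiv z y)
}.

Definition rmeet (A : RRMagma) (x y : A) : A := mul A (rdiv A x y) y.

Definition condN (A : RRMagma) : Prop :=
  forall x y : A, le A x y <-> x = rmeet A y x.

Definition is_maximal (A : RRMagma) (m : A) : Prop :=
  forall z : A, le A m z -> z = m.

Definition is_top (A : RRMagma) (t : A) : Prop :=
  forall z : A, le A z t.


(* Put e := x/x. Condition (N) with y = x gives e x = x.  If e <= z, monotonicity
   gives x <= z x, so (N) makes x = (z x / x) x, whence z x / x <= e by
   residuation; as z <= z x / x, z <= e.  This maximality yields all three parts:
   e <= (e y)/y, and a top element lies above e. *)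

Section RightResiduatedMagma.

Variable A : RRMagma.

Lemma le_mul_rdiv (x y : A) : le A x (rdiv A (mul A x y) y).
Proof. apply residuation, le_refl. Qed.

Lemma le_mul2r (x z y : A) : le A x z -> le A (mul A x y) (mul A z y).
Proof.
intros Hxz; apply residuation.
exact (le_trans A _ _ _ Hxz (le_mul_rdiv z y)).
Qed.

Hypothesis HN : condN A.

Lemma mul_rdivxx (x : A) : mul A (rdiv A x x) x = x.
Proof. symmetry; apply HN, le_refl. Qed.

Lemma rdivxx_maximal (x : A) : is_maximal A (rdiv A x x).
Proof.
intros z Hz.
assert (Hx : le A x (mul A z x)).
{ pose proof (le_mul2r _ _ x Hz) as Hmono; rewrite mul_rdivxx in Hmono; exact Hmono. }
assert (Hzx : le A (rdiv A (mul A z x) x) (rdiv A x x)).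
{ apply residuation; pose proof (proj1 (HN _ _) Hx) as Hmeet; unfold rmeet in Hmeet.
  rewrite <- Hmeet; apply le_refl. }
apply le_antisym; [| exact Hz].
exact (le_trans A _ _ _ (le_mul_rdiv z x) Hzx).
Qed.

End RightResiduatedMagma.

Theorem mainTheorem6 (A : RRMagma) (HN : condN A) :
  (forall x : A, is_maximal A (rdiv A x x)) /\
  (forall x y : A, rdiv A (mul A (rdiv A x x) y) y = rdiv A x x) /\
  (forall t : A, is_top A t -> forall x : A, rdiv A x x = t).
Proof.
split; [| split].
- exact (rdivxx_maximal A HN).
- intros x y; exact (rdivxx_maximal A HN x _ (le_mul_rdiv A _ y)).
- intros t Ht x; symmetry; exact (rdivxx_maximal A HN x t (Ht _)).
Qed.
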